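(* Consider the two-agent technology adoption game. There exists $\varepsilon_0>0$ such that for every $\varepsilon\in(0,\varepsilon_0)$ there is a nonempty open interval $J\subset(0,1)$ of costs such that for every $c\in J$: with the single seed 1 there is an equilibrium in which the probability that both agents adopt is strictly greater than the probability that both adopt in every equilibrium with two seeds.
   Context: Fix $\rho\in(0,1)$, $\varepsilon\in(0,1)$, two agents $1,2$ linked to each other, state $\theta\in\{g,b\}$ with $\Pr(\theta=g)=\rho$; in state $b$ no messages are sent. Every transmission is lost independently with probability $\varepsilon$. Single seed: in state $g$ the planner sends to 1, who, if she receives it, forwards it to 2; each agent observes only whether she received a message. Two seeds: in state $g$ the planner sends to both 1 and 2; an agent who receives the planner's message forwards it to the other agent; an agent does not forward a message she received only from the other agent; each agent observes which of the two sources (planner, other agent) delivered a message to her. Technology adoption game with cost $c\in(0,1)$: each agent chooses $a_i\in\{0,1\}$ (possibly mixed) as a function of her information; payoff $a_i(\mathbf 1[\theta=g\text{ and both adopt}]-c)$; equilibria are Bayesian Nash equilibria. *)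

From HB Require Import structures.
From mathcomp Require Import all_boot all_order all_algebra.
From mathcomp Require Import Rstruct.
From Stdlib Require Import Rdefinitions.

Set Implicit Arguments.
Unset Strict Implicit.
Unset Printing Implicit Defensive.

Import Order.TTheory GRing.Theory Num.Theory.
Local Open Scope ring_scope.

Notation R := Rdefinitions.R.

(*  good w  : whether the state theta is g at outcome w                 *)
(* A (mixed, behavioural) strategy of agent i is a map S_i -> [0,1]    *)
(* giving the probability of adopting after each signal.               *)

Definition mixed_strategy (S : finType) (s : S -> R) : Prop :=
  forall x, 0 <= s x <= 1.

Definition exp_payoff (Om Si Sj : finType) (prob : Om -> R) (good : Om -> bool)
  (sigi : Om -> Si) (sigj : Om -> Sj) (c : R) (si : Si -> R) (sj : Sj -> R) : R :=
  \sum_(w : Om) prob w * si (sigi w) * ((if good w then sj (sigj w) else 0) - c).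

Definition is_BNE (Om S1 S2 : finType) (prob : Om -> R) (good : Om -> bool)
  (sig1 : Om -> S1) (sig2 : Om -> S2) (c : R) (s1 : S1 -> R) (s2 : S2 -> R) : Prop :=
  [/\ mixed_strategy s1, mixed_strategy s2,
      (forall t1 : S1 -> R, mixed_strategy t1 ->
         exp_payoff prob good sig1 sig2 c t1 s2 <= exp_payoff prob good sig1 sig2 c s1 s2)
    & (forall t2 : S2 -> R, mixed_strategy t2 ->
         exp_payoff prob good sig2 sig1 c t2 s1 <= exp_payoff prob good sig2 sig1 c s2 s1)].

(* Probability that both agents adopt (randomizations independent given signals). *)
Definition prob_both (Om S1 S2 : finType) (prob : Om -> R)
  (sig1 : Om -> S1) (sig2 : Om -> S2) (s1 : S1 -> R) (s2 : S2 -> R) : R :=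
  \sum_(w : Om) prob w * s1 (sig1 w) * s2 (sig2 w).

(* Probability that a given transmission is delivered (true) / lost.   *)
Definition pdeliv (eps : R) (b : bool) : R := if b then 1 - eps else eps.
Definition pstate (rho : R) (g : bool) : R := if g then rho else 1 - rho.

(* Single seed.  Outcome (g, a, f): g = state is good; a = planner->1   *)
(* transmission delivered; f = forward 1->2 delivered.  In state b no   *)
(* message is sent, so a and f are then irrelevant dummies.             *)
Definition Om1 : finType := (bool * bool * bool)%type.
Definition prob1 (rho eps : R) (w : Om1) : R :=
  let: (g, a, f) := w in pstate rho g * pdeliv eps a * pdeliv eps f.
Definition good1 (w : Om1) : bool := w.1.1.
(* agent 1 received a message *)
Definition sig1_1 (w : Om1) : bool := let: (g, a, f) := w in g && a.
(* agent 2 received a message (only via the forward from 1) *)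
Definition sig1_2 (w : Om1) : bool := let: (g, a, f) := w in [&& g, a & f].

(* Two seeds.  Outcome (g, (a1, a2, f12, f21)): a_i = planner->i        *)
(* delivered; f12 = forward 1->2 delivered; f21 = forward 2->1          *)
(* delivered.  An agent forwards only the planner's message.  Signal   *)
(* of agent i = (received from planner, received from the other agent). *)
Definition Om2 : finType := (bool * (bool * bool * bool * bool))%type.
Definition prob2 (rho eps : R) (w : Om2) : R :=
  let: (g, (a1, a2, f12, f21)) := w in
  pstate rho g * pdeliv eps a1 * pdeliv eps a2 * pdeliv eps f12 * pdeliv eps f21.
Definition good2 (w : Om2) : bool := w.1.
Definition sig2_1 (w : Om2) : bool * bool :=
  let: (g, (a1, a2, f12, f21)) := w in (g && a1, [&& g, a2 & f21]).
Definition sig2_2 (w : Om2) : bool * bool :=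
  let: (g, (a1, a2, f12, f21)) := w in (g && a2, [&& g, a1 & f12]).

Definition BNE_single (rho eps c : R) (s1 s2 : bool -> R) : Prop :=
  is_BNE (prob1 rho eps) good1 sig1_1 sig1_2 c s1 s2.
Definition both_single (rho eps : R) (s1 s2 : bool -> R) : R :=
  prob_both (prob1 rho eps) sig1_1 sig1_2 s1 s2.

Definition BNE_two (rho eps c : R) (s1 s2 : bool * bool -> R) : Prop :=
  is_BNE (prob2 rho eps) good2 sig2_1 sig2_2 c s1 s2.
Definition both_two (rho eps : R) (s1 s2 : bool * bool -> R) : R :=
  prob_both (prob2 rho eps) sig2_1 sig2_2 s1 s2.

From HB Require Import structures.
From mathcomp Require Import all_boot all_order all_algebra.
From mathcomp Require Import Rstruct.
From mathcomp Require Import lra ring.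
Set Implicit Arguments.
Unset Strict Implicit.
Unset Printing Implicit Defensive.

Import Order.TTheory GRing.Theory Num.Theory.
Local Open Scope ring_scope.

(* For costs [c] with [2 rho eps^2 / (1 - rho) < c < rho eps]:
   - with a single seed, "always adopt" is an equilibrium: even the uninformed
     agent 1 puts posterior weight about [rho eps] on the good state, enough to
     cover [c], so both agents adopt with probability one;
   - with two seeds, agent 1 hears nothing in state [g] only if her own seed
     message is lost and so is one link of the relay planner -> 2 -> 1, which
     happens with probability [eps^2 (2 - eps)]; against any
     partner, adopting after this signal has negative value, so in every
     equilibrium agent 1 abstains after it and both adopt with probability at
     most [rho (1 - eps^2 (2 - eps)) < 1].
   The interval of costs is nonempty as soon as [eps < (1 - rho) / 2]. *)

Section BayesianAdoptionGame.

Variables (Om Si Sj : finType) (prob : Om -> R) (good : Om -> bool).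
Variables (sigi : Om -> Si) (sigj : Om -> Sj) (c : R).

Definition best_response (si : Si -> R) (sj : Sj -> R) : Prop :=
  forall t : Si -> R, mixed_strategy t ->
    exp_payoff prob good sigi sigj c t sj <= exp_payoff prob good sigi sigj c si sj.

(* Value of adopting after signal [x] when the partner always adopts; it bounds
   the value of adopting after [x] against any partner. *)
Definition adoption_gain (x : Si) : R :=
  \sum_(w | sigi w == x) prob w * ((if good w then 1 else 0) - c).

Lemma exp_payoff_adopt_always (t : Si -> R) :
  exp_payoff prob good sigi sigj c t (fun _ => 1) = \sum_x t x * adoption_gain x.
Proof.
rewrite /exp_payoff (partition_big sigi predT) //=.
apply: eq_bigr => x _; rewrite mulr_sumr; apply: eq_bigr => w /eqP <-.
by rewrite mulrCA mulrA.
Qed.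

Lemma best_response_adopt_always :
  (forall x, 0 <= adoption_gain x) -> best_response (fun _ => 1) (fun _ => 1).
Proof.
move=> gain_ge0 t ht; rewrite !exp_payoff_adopt_always.
apply: ler_sum => x _; apply: ler_wpM2r => //.
by case/andP: (ht x).
Qed.

Hypothesis prob_ge0 : forall w, 0 <= prob w.

(* Abstaining after [x] instead gains at least [- si x * adoption_gain x]. *)
Lemma best_response_abstain (si : Si -> R) (sj : Sj -> R) (x : Si) :
  mixed_strategy si -> mixed_strategy sj -> best_response si sj ->
  adoption_gain x < 0 -> si x = 0.
Proof.
move=> hsi hsj hbr gain_lt0.
pose t y := if y == x then 0 else si y.
have ht : mixed_strategy t by move=> y; rewrite /t; case: eqP => // _; rewrite lexx ler01.
have deviation_loss :
    exp_payoff prob good sigi sigj c si sj - exp_payoff prob good sigi sigj c t sj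
    <= si x * adoption_gain x.
  rewrite /exp_payoff -sumrB /adoption_gain [X in _ <= _ * X]big_mkcond mulr_sumr.
  apply: ler_sum => w _; rewrite /t.
  case: eqP => [->|_]; last by rewrite subrr mulr0.
  case/andP: (hsi x) => si_ge0 _.
  rewrite mulr0 mul0r subr0 -mulrA [X in _ <= X]mulrCA.
  do 2 apply: ler_wpM2l => //; rewrite lerD2r.
  by case: (good w) => //; case/andP: (hsj (sigj w)).
have := hbr t ht; case/andP: (hsi x) => si_ge0 _.
nra.
Qed.

End BayesianAdoptionGame.

Lemma BNE_adopt_always (Om S1 S2 : finType) (prob : Om -> R) (good : Om -> bool)
    (sig1 : Om -> S1) (sig2 : Om -> S2) (c : R) :
  (forall x, 0 <= adoption_gain prob good sig1 c x) ->
  (forall x, 0 <= adoption_gain prob good sig2 c x) ->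
  is_BNE prob good sig1 sig2 c (fun _ => 1) (fun _ => 1).
Proof.
move=> gain1 gain2; split; try exact: best_response_adopt_always;
  by move=> x; rewrite lexx ler01.
Qed.

Lemma prob_both_adopt_always (Om S1 S2 : finType) (prob : Om -> R)
    (sig1 : Om -> S1) (sig2 : Om -> S2) :
  prob_both prob sig1 sig2 (fun _ => 1) (fun _ => 1) = \sum_w prob w.
Proof. by apply: eq_bigr => w _; rewrite !mulr1. Qed.

Lemma prob_both_le_abstain (Om S1 S2 : finType) (prob : Om -> R)
    (sig1 : Om -> S1) (sig2 : Om -> S2) (s1 : S1 -> R) (s2 : S2 -> R) (x : S1) :
  (forall w, 0 <= prob w) -> mixed_strategy s1 -> mixed_strategy s2 ->
  s1 x = 0 -> prob_both prob sig1 sig2 s1 s2 <= \sum_(w | sig1 w != x) prob w.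
Proof.
move=> prob_ge0 hs1 hs2 s1x0; rewrite /prob_both [X in _ <= X]big_mkcond.
apply: ler_sum => w _; case: eqP => [->|_] /=; first by rewrite s1x0 mulr0 mul0r.
case/andP: (hs1 (sig1 w)) => ? ?; case/andP: (hs2 (sig2 w)) => ? ?.
by rewrite -mulrA ler_piMr // ?mulr_ge0 // mulr_ile1.
Qed.

Lemma big_pairE (I J : finType) (F : I * J -> R) :
  \sum_(w : I * J) F w = \sum_i \sum_j F (i, j).
Proof. by rewrite pair_big; apply: eq_bigr => -[]. Qed.

Section Seeds.

Variables (rho eps : R).

Lemma prob1_sum : \sum_w prob1 rho eps w = 1.
Proof. rewrite !(big_pairE, big_bool) /prob1 /pdeliv /pstate /= ?RmultE; ring. Qed.

Lemma adoption_gain_single_1 c (x : bool) :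
  adoption_gain (prob1 rho eps) good1 sig1_1 c x =
  if x then rho * (1 - eps) * (1 - c) else rho * eps * (1 - c) - (1 - rho) * c.
Proof.
rewrite /adoption_gain big_mkcond !(big_pairE, big_bool) /prob1 /pdeliv /pstate.
by case: x => /=; rewrite ?RmultE; ring.
Qed.

Lemma adoption_gain_single_2 c (x : bool) :
  adoption_gain (prob1 rho eps) good1 sig1_2 c x =
  if x then rho * (1 - eps) ^+ 2 * (1 - c)
  else rho * eps * (2 - eps) * (1 - c) - (1 - rho) * c.
Proof.
rewrite /adoption_gain big_mkcond !(big_pairE, big_bool) /prob1 /pdeliv /pstate.
by case: x => /=; rewrite ?RmultE; ring.
Qed.

Lemma adoption_gain_two_uninformed c :
  adoption_gain (prob2 rho eps) good2 sig2_1 c (false, false) =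
  rho * eps ^+ 2 * (2 - eps) * (1 - c) - (1 - rho) * c.
Proof.
rewrite /adoption_gain big_mkcond !(big_pairE, big_bool) /prob2 /pdeliv /pstate /=.
rewrite ?RmultE; ring.
Qed.

Lemma prob2_informed :
  \sum_(w | sig2_1 w != (false, false)) prob2 rho eps w = rho * (1 - eps ^+ 2 * (2 - eps)).
Proof.
rewrite big_mkcond !(big_pairE, big_bool) /prob2 /pdeliv /pstate /= ?RmultE; ring.
Qed.

Lemma prob2_ge0 w : 0 <= rho <= 1 -> 0 <= eps <= 1 -> 0 <= prob2 rho eps w.
Proof.
case/andP=> rho_ge0 rho_le1 /andP[eps_ge0 eps_le1].
have pdeliv_ge0 b : 0 <= pdeliv eps b by case: b; rewrite /pdeliv ?subr_ge0.
have pstate_ge0 b : 0 <= pstate rho b by case: b; rewrite /pstate ?subr_ge0.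
by case: w => g [[[a1 a2] f12] f21]; rewrite /prob2 !mulr_ge0.
Qed.

Lemma BNE_single_adopt_always c :
  0 <= rho -> 0 <= eps <= 1 -> c <= 1 -> (1 - rho) * c <= rho * eps * (1 - c) ->
  BNE_single rho eps c (fun _ => 1) (fun _ => 1).
Proof.
move=> rho_ge0 /andP[eps_ge0 eps_le1] c_le1 uninformed_ok.
apply: BNE_adopt_always => -[].
- by rewrite adoption_gain_single_1 !mulr_ge0 ?subr_ge0.
- by rewrite adoption_gain_single_1 subr_ge0.
- by rewrite adoption_gain_single_2 !mulr_ge0 ?sqr_ge0 ?subr_ge0.
- rewrite adoption_gain_single_2 subr_ge0; apply: le_trans uninformed_ok _.
  apply: ler_wpM2r; first by rewrite subr_ge0.
  by rewrite ler_peMr ?mulr_ge0 // lerBrDr; lra.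
Qed.

Lemma both_two_le_informed c (t1 t2 : bool * bool -> R) :
  0 <= rho <= 1 -> 0 <= eps <= 1 ->
  rho * eps ^+ 2 * (2 - eps) * (1 - c) < (1 - rho) * c ->
  BNE_two rho eps c t1 t2 -> both_two rho eps t1 t2 <= rho * (1 - eps ^+ 2 * (2 - eps)).
Proof.
move=> hrho heps uninformed_bad [ht1 ht2 hbr1 _].
have prob_ge0 w := prob2_ge0 w hrho heps.
have abstain : t1 (false, false) = 0.
  apply: (best_response_abstain prob_ge0 ht1 ht2 hbr1).
  by rewrite adoption_gain_two_uninformed subr_lt0.
by rewrite -prob2_informed; apply: prob_both_le_abstain prob_ge0 ht1 ht2 abstain.
Qed.

End Seeds.

Theorem mainTheorem11 (rho : R) (hrho0 : 0 < rho) (hrho1 : rho < 1) :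
  exists eps0 : R, 0 < eps0 /\
    forall eps : R, 0 < eps -> eps < 1 -> eps < eps0 ->
      exists lo hi : R, [/\ 0 <= lo, lo < hi, hi <= 1 &
        forall c : R, lo < c -> c < hi ->
          exists s1 s2 : bool -> R,
            BNE_single rho eps c s1 s2 /\
            forall t1 t2 : bool * bool -> R,
              BNE_two rho eps c t1 t2 ->
              both_two rho eps t1 t2 < both_single rho eps s1 s2].
Proof.
exists ((1 - rho) / 2); split=> [|eps he0 he1 he_small]; first lra.
have hr : 0 < 1 - rho by lra.
have he_half : 2 * eps < 1 - rho by lra.
have hre : 0 < rho * eps by rewrite mulr_gt0.
have hrho : 0 <= rho <= 1 by apply/andP; split; lra.
have heps : 0 <= eps <= 1 by apply/andP; split; lra.
exists (2 * rho * eps ^+ 2 / (1 - rho)), (rho * eps); split.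
- by apply: divr_ge0; [rewrite expr2 | ]; nra.
- by rewrite ltr_pdivrMr // expr2; nra.
- nra.
move=> c hlo hhi; rewrite ltr_pdivrMr // in hlo.
have hc0 : 0 < c.
  have : 0 < 2 * rho * eps ^+ 2 by rewrite !mulr_gt0 ?exprn_gt0.
  nra.
have hc1 : c < 1 by nra.
exists (fun _ => 1), (fun _ => 1); split.
  apply: BNE_single_adopt_always; rewrite ?(ltW hc1) //; first lra.
  have : 0 <= c * rho * (1 - eps) by rewrite !mulr_ge0 //; lra.
  lra.
move=> t1 t2 hBNE; rewrite /both_single prob_both_adopt_always prob1_sum.
have rho_eps2_ge0 : 0 <= rho * eps ^+ 2 by rewrite mulr_ge0 ?sqr_ge0 //; lra.
have gain_le : rho * eps ^+ 2 * ((2 - eps) * (1 - c)) <= rho * eps ^+ 2 * 2.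
  apply: ler_wpM2l => //.
  have : eps * c <= c by rewrite ger_pMl //; lra.
  lra.
apply: le_lt_trans (both_two_le_informed hrho heps _ hBNE) _; first lra.
have : 0 < rho * (eps ^+ 2 * (2 - eps)) by rewrite !mulr_gt0 ?exprn_gt0 //; lra.
lra.
Qed.
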